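(* Let $F$ be any field, $n\ge1$, and let $h_n\in\mathbb Z[X_1,\dots,X_n]$ be the polynomial defined in the context. Let $f=X^n+a_1X^{n-1}+\cdots+a_n\in F[X]$ be separable and irreducible with cyclic Galois group over $F$. If $h_n(a_1,\dots,a_n)\ne0$ (evaluated in $F$), then $f$ is normal over $F$, i.e., the roots of $f$ form a basis of the splitting field $K$ of $f$ over $F$.
   Context: For $m\ge1$ let $\epsilon_m=e^{2\pi\sqrt{-1}/m}$ and $\Psi_m(X_0,\dots,X_{m-1})=\prod_{i\in(\mathbb Z/m\mathbb Z)^\times}\bigl(\sum_{j\in\mathbb Z/m\mathbb Z}\epsilon_m^{ij}X_j\bigr)$, which lies in $\mathbb Z[X_0,\dots,X_{m-1}]$. Let $S_m$ act on polynomials in $X_0,\dots,X_{m-1}$ by $\sigma(X_j)=X_{\sigma(j)}$, let $\mathrm{Stab}(\Psi_m)$ be the stabilizer of $\Psi_m$, let $\mathcal C_m$ be a system of representatives of the left cosets of $\mathrm{Stab}(\Psi_m)$ in $S_m$, and set $\Phi_m=\prod_{\sigma\in\mathcal C_m}\sigma(\Psi_m)$ (a symmetric polynomial in $\mathbb Z[X_0,\dots,X_{m-1}]$, independent of the choice of $\mathcal C_m$). For $m\mid n$, let $\mathcal P_{n,m}$ be the set of unordered partitions of $\{0,1,\dots,n-1\}$ into $m$ parts $P_0,\dots,P_{m-1}$ each of size $n/m$, and define \[ \Theta_{n,m}(X_0,\dots,X_{n-1})=\prod_{\{P_0,\dots,P_{m-1}\}\in\mathcal P_{n,m}}\Phi_m\Bigl(\sum_{a\in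 P_0}X_a,\dots,\sum_{a\in P_{m-1}}X_a\Bigr). \] $\Theta_{n,m}$ is a symmetric polynomial in $\mathbb Z[X_0,\dots,X_{n-1}]$, so there is a unique $\theta_{n,m}\in\mathbb Z[X_1,\dots,X_n]$ with $\Theta_{n,m}(X_0,\dots,X_{n-1})=\theta_{n,m}(s_1,\dots,s_n)$, where $s_i$ is the $i$-th elementary symmetric polynomial in $X_0,\dots,X_{n-1}$. Finally $h_n=\prod_{m\mid n}\theta_{n,m}$. *)

From HB Require Import structures.
From mathcomp Require Import all_boot all_order all_algebra all_fingroup.
From mathcomp Require Import all_solvable all_field.
From mathcomp Require Import mpoly.
From Stdlib Require Import ClassicalEpsilon.

Set Implicit Arguments.
Unset Strict Implicit.
Unset Printing Implicit Defensive.

Import GRing.Theory.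
Local Open Scope ring_scope.

(* A primitive m-th root of unity in algC (for m >= 1).  Psi_m does not
   depend on which primitive root is chosen. *)
Definition eps (m : nat) : algC :=
  if m is k.+1 then sval (C_prim_root_exists (ltn0Sn k)) else 1.

(* For i < m, i is a unit
   mod m iff coprime i m (this also covers m = 1, where 0 is a unit). *)
Definition Psi (m : nat) : {mpoly algC[m]} :=
  \prod_(i < m | coprime i m) \sum_(j < m) (eps m ^+ (i * j)) *: 'X_j.

Definition StabPsi (m : nat) : {set 'S_m} :=
  [set s : 'S_m | msym s (Psi m) == Psi m].

(* MathComp's permutation product is (s * t) x = t (s x), i.e. the reverse
   of composition, so the paper's left cosets sigma o Stab are MathComp's
   right cosets Stab :* sigma; msym (repr C) (Psi m) depends only on C. *)
Definition Phi (m : nat) : {mpoly algC[m]} :=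
  \prod_(C in rcosets (StabPsi m) [set: 'S_m]) msym (repr C) (Psi m).

Definition eq_partitions (n m : nat) : {set {set {set 'I_n}}} :=
  [set P : {set {set 'I_n}} | [&& partition P [set: 'I_n], #|P| == m
                                & [forall B in P, #|B| == (n %/ m)%N]]].

(* Theta_{n,m}: for each partition, the blocks are listed in some order
   (enum P) as P_0, ..., P_{m-1}; Phi_m is symmetric so the order is
   irrelevant. *)
Definition Theta (n m : nat) : {mpoly algC[n]} :=
  \prod_(P in eq_partitions n m)
     (Phi m \mPo [tuple \sum_(a in nth set0 (enum P) i) 'X_a | i < m]).

Definition elem_sym (n : nat) : n.-tuple {mpoly algC[n]} :=
  [tuple mesym n algC i.+1 | i < n].

(* theta_{n,m}: the (unique) integer polynomial with
   Theta_{n,m} = theta_{n,m}(s_1, ..., s_n).  Variable i : 'I_n stands for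
   X_{i+1}. *)
Definition theta (n m : nat) : {mpoly int[n]} :=
  epsilon (inhabits 0)
    (fun t : {mpoly int[n]} => map_mpoly intr t \mPo elem_sym n = Theta n m).

Definition h (n : nat) : {mpoly int[n]} :=
  \prod_(m <- divisors n) theta n m.

(* Let g generate Gal(K/F) and let y be a root of f.  By transitivity the
   roots are y_j = g^j y (0 <= j < n), so a linear relation sum_j c_j y_j = 0,
   moved by the powers of g, is a nonzero vector in the kernel of the circulant
   matrix C(-y_0, ..., -y_(n-1)).  As there are n = [K : F] roots, it suffices
   to show det C != 0.
   Over Z[X_0, ..., X_(n-1)] the circulant determinant is the product of the
   forms sum_a z^a X_a over the n-th roots of unity z.  Grouping them by the
   order m of z gives prod_(m | n) Psi_m(Y_m), where Y_m lists the sums of the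
   X_a over the residue classes mod m; and Psi_m(Y_m) is the factor of
   Theta_(n,m) indexed by the residue-class partition and the trivial coset of
   Stab(Psi_m).  Every other factor has integer coefficients, so det C(X)
   divides h_n(s_1, ..., s_n) in Z[X].  At X = -y the s_i become the
   coefficients a_i of f, hence h_n(a) != 0 gives det C(-y) != 0. *)

From HB Require Import structures.
From mathcomp Require Import all_boot all_order all_algebra all_fingroup.
From mathcomp Require Import all_solvable all_field.
From mathcomp Require Import mpoly.
From Stdlib Require Import ClassicalEpsilon.

Set Implicit Arguments.
Unset Strict Implicit.
Unset Printing Implicit Defensive.

Import GRing.Theory.
Local Open Scope ring_scope.

Lemma rmorph_mpolyE n (R S : comNzRingType) (g : {rmorphism {mpoly R[n]} -> S})
    (p : {mpoly R[n]}) :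
  g p = mmap (g \o @mpolyC n R) (fun i => g 'X_i) p.
Proof.
rewrite {1}(mpolyE p) rmorph_sum; apply: eq_bigr => m _.
by rewrite -mul_mpolyC rmorphM mpolyXE_id rmorph_prod; congr (_ * _);
  apply: eq_bigr => i _; rewrite rmorphXn.
Qed.

Section MmapTheory.
Variables (n : nat) (R : comNzRingType).

Lemma eq_mmap (S : comNzRingType) (f1 f2 : R -> S) (v1 v2 : 'I_n -> S) (p : {mpoly R[n]}) :
  f1 =1 f2 -> v1 =1 v2 -> mmap f1 v1 p = mmap f2 v2 p.
Proof.
by move=> ef ev; apply: eq_bigr => m _; rewrite ef (mmap1_eq _ ev).
Qed.

Lemma mmap_comp_mpoly (S : comNzRingType) k (f : {rmorphism R -> S}) (v : 'I_k -> S)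
    (p : {mpoly R[n]}) (lq : n.-tuple {mpoly R[k]}) :
  mmap f v (p \mPo lq) = mmap f (fun i => mmap f v (tnth lq i)) p.
Proof.
apply: etrans (rmorph_mpolyE (mmap f v \o comp_mpoly lq) p) _.
by apply: eq_mmap => [c|i] /=; rewrite ?comp_mpolyC ?mmapC // comp_mpolyXU -tnth_nth.
Qed.

Lemma meval_map_mpoly (S : comNzRingType) (f : {rmorphism R -> S}) (v : 'I_n -> S)
    (p : {mpoly R[n]}) :
  (map_mpoly f p).@[v] = mmap f v p.
Proof.
apply: etrans (rmorph_mpolyE (meval v \o map_mpoly f) p) _.
by apply: eq_mmap => [c|i] /=; rewrite ?map_mpolyC ?mevalC // (map_mpolyX f U_(i)) mevalXU.
Qed.

Lemma rmorph_mmap (S T : comNzRingType) (f : {rmorphism R -> S}) (phi : {rmorphism S -> T})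
    (v : 'I_n -> S) (p : {mpoly R[n]}) :
  phi (mmap f v p) = mmap (phi \o f) (phi \o v) p.
Proof.
apply: etrans (rmorph_mpolyE (phi \o mmap f v) p) _.
by apply: eq_mmap => [c|i] /=; rewrite ?mmapC // (mmapX _ _ U_(i)) mmap1U.
Qed.

Lemma mmap_mesym (S : comNzRingType) (f : {rmorphism R -> S}) (v : 'I_n -> S) k :
  mmap f v (mesym n R k) = (mesym n S k).@[v].
Proof.
rewrite !mesymE raddf_sum /= raddf_sum /=.
by apply: eq_bigr => s _; rewrite mmapX mevalX.
Qed.

Lemma map_mesym (S : comNzRingType) (f : {rmorphism R -> S}) k :
  map_mpoly f (mesym n R k) = mesym n S k.
Proof. by rewrite !mesymE raddf_sum /=; apply: eq_bigr => s _; rewrite map_mpolyX. Qed.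

Lemma map_mpoly_inj (S : comNzRingType) (f : {rmorphism R -> S}) :
  injective f -> injective (map_mpoly (n := n) f).
Proof.
by move=> f_inj p q epq; apply/mpolyP => m; apply: f_inj; rewrite -!mcoeff_map_mpoly epq.
Qed.

Lemma map_msym (S : comNzRingType) (f : {rmorphism R -> S}) (s : 'S_n) (p : {mpoly R[n]}) :
  map_mpoly f (msym s p) = msym s (map_mpoly f p).
Proof. by apply/mpolyP => m; rewrite mcoeff_map_mpoly !mcoeff_sym mcoeff_map_mpoly. Qed.

Lemma msymXU (s : 'S_n) i : msym s ('X_i : {mpoly R[n]}) = 'X_(s i).
Proof. by rewrite /msym mmapX mmap1U. Qed.

Lemma msym_comp_mpoly k (s : 'S_k) (p : {mpoly R[n]}) (t : n.-tuple {mpoly R[k]}) :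
  msym s (p \mPo t) = p \mPo [tuple msym s (tnth t i) | i < n].
Proof.
rewrite /comp_mpoly (rmorph_mmap (mpolyC k (R := R)) (msym s)).
by apply: eq_mmap => [c|i] /=; rewrite ?tnth_mktuple // /msym mmapC.
Qed.

Lemma comp_mpoly_perm_eq k (p : {mpoly R[n]}) (t1 t2 : n.-tuple {mpoly R[k]}) :
  p \is symmetric -> perm_eq t1 t2 -> p \mPo t1 = p \mPo t2.
Proof.
move=> /issymP p_sym /tuple_permP [s t1E].
have -> : t1 = [tuple tnth t2 (s i) | i < n] by apply: val_inj.
by rewrite -msym_mPo p_sym.
Qed.

Lemma prod_msym_sym (F : 'I_n -> {mpoly R[n]}) :
  (forall (s : 'S_n) i, msym s (F i) = F (s i)) -> \prod_(i < n) F i \is symmetric.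
Proof.
move=> FE; apply/issymP => s; rewrite rmorph_prod /=.
rewrite (reindex_inj (@perm_inj _ s^-1)) /=.
by apply: eq_bigr => i _; rewrite FE permKV.
Qed.

End MmapTheory.

Lemma rmorph_meval_intr (S T : comNzRingType) (phi : {rmorphism S -> T}) n
    (p : {mpoly int[n]}) (v : 'I_n -> S) :
  phi ((map_mpoly intr p).@[v]) = (map_mpoly intr p).@[phi \o v].
Proof.
by rewrite !meval_map_mpoly rmorph_mmap; apply: eq_mmap => // c /=; rewrite rmorph_int.
Qed.

Lemma meval_mesym_opp (R : comNzRingType) n k (v : 'I_n -> R) :
  (mesym n R k).@[fun i => - v i] = (-1) ^+ k * (mesym n R k).@[v].
Proof.
rewrite mesymE !raddf_sum /= mulr_sumr; apply: eq_bigr => s /eqP <-.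
rewrite !mevalX; under eq_bigr do rewrite exprNn.
rewrite big_split /= prodrXr -sum1_card [in RHS]big_mkcond /=; congr (_ ^+ _ * _).
by apply: eq_bigr => i _; rewrite /mesym1 mnmE; case: (i \in s).
Qed.

(** * Integrality and symmetry of Psi, Phi and Theta *)

Definition int_mpoly n (p : {mpoly algC[n]}) : Prop :=
  exists q : {mpoly int[n]}, map_mpoly intr q = p.

Section IntMpoly.
Variable n : nat.
Implicit Types p q : {mpoly algC[n]}.

Lemma int_mpolyM p q : int_mpoly p -> int_mpoly q -> int_mpoly (p * q).
Proof. by move=> [a <-] [b <-]; exists (a * b); rewrite rmorphM. Qed.

Lemma int_mpoly_prod (I : Type) (r : seq I) (P : pred I) (F : I -> {mpoly algC[n]}) :
  (forall i, P i -> int_mpoly (F i)) -> int_mpoly (\prod_(i <- r | P i) F i).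
Proof.
apply: big_ind => [|p q]; last exact: int_mpolyM.
by exists 1; rewrite rmorph1.
Qed.

Lemma int_mpoly_sum (I : Type) (r : seq I) (P : pred I) (F : I -> {mpoly algC[n]}) :
  (forall i, P i -> int_mpoly (F i)) -> int_mpoly (\sum_(i <- r | P i) F i).
Proof.
apply: big_ind => [|_ _ [a <-] [b <-]]; first by exists 0; rewrite rmorph0.
by exists (a + b); rewrite rmorphD.
Qed.

Lemma int_mpoly_sumX (A : {pred 'I_n}) : int_mpoly (\sum_(a in A) 'X_a : {mpoly algC[n]}).
Proof.
by apply: int_mpoly_sum => a _; exists 'X_a; rewrite (map_mpolyX _ U_(a)).
Qed.

Lemma int_mpoly_msym (s : 'S_n) p : int_mpoly p -> int_mpoly (msym s p).
Proof. by move=> [a <-]; exists (msym s a); rewrite map_msym. Qed.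

Lemma int_mpoly_comp k p (t : n.-tuple {mpoly algC[k]}) :
  int_mpoly p -> (forall i, int_mpoly (tnth t i)) -> int_mpoly (p \mPo t).
Proof.
move=> [a <-] /fin_all_exists [b bE]; exists (a \mPo [tuple b i | i < n]).
rewrite map_mpoly_comp; last exact: intr_inj.
by congr (_ \mPo _); apply: eq_from_tnth => i; rewrite tnth_map tnth_mktuple bE.
Qed.

End IntMpoly.

Lemma int_mpoly_prod_roots k (r : seq algC) (p : {poly int}) :
    map_poly intr p = \prod_(c <- r) ('X - c%:P) ->
  int_mpoly (\prod_(c <- r) \sum_(j < k) c ^+ j *: 'X_j).
Proof.
(* G is symmetric in the variables X_c standing for the roots, hence an integer
   polynomial T in their elementary symmetric functions, which evaluate at the
   roots to the integers a i, up to sign the coefficients of p. *)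
move=> pE; pose t := in_tuple r; pose N := size r.
pose G : {mpoly {mpoly int[k]}[N]} := \prod_(c < N) \sum_(j < k) 'X_j *: 'X_c ^+ j.
have G_sym : G \is symmetric.
  apply: prod_msym_sym => s c; rewrite rmorph_sum; apply: eq_bigr => j _.
  by rewrite /= msymZ rmorphXn /= msymXU.
have [T [GE _]] := sym_fundamental G_sym.
pose ev := mmap (map_mpoly intr) (fun c => (tnth t c)%:MP_[k]).
have evG : ev G = \prod_(c <- r) \sum_(j < k) c ^+ j *: 'X_j.
  rewrite [RHS](big_tuple _ _ t) /ev /G rmorph_prod; apply: eq_bigr => c _.
  rewrite rmorph_sum; apply: eq_bigr => j _.
  rewrite /= mmapZ rmorphXn /= (mmapX _ _ U_(c)) mmap1U (map_mpolyX _ U_(j)).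
  by rewrite -rmorphXn mulrC mul_mpolyC.
pose a (i : 'I_N) : int := (-1) ^+ i.+1 * p`_(N - i.+1).
have mesym_roots (i : 'I_N) : (mesym N algC i.+1).@[tnth t] = (a i)%:~R.
  have := mroots_coeff t (lift ord0 i); rewrite -pE coef_map /= /bump leq0n add1n.
  by rewrite /a /N rmorphM rmorph_sign /= => ->; rewrite signrMK.
exists (mmap idfun (fun i => (a i)%:MP) T).
rewrite -evG -GE /ev mmap_comp_mpoly rmorph_mmap; apply: eq_mmap => // i /=.
rewrite map_mpolyC /= tnth_mktuple mmap_mesym -mesym_roots /meval.
by rewrite (rmorph_mmap idfun (mpolyC k (R := algC))) mmap_mesym.
Qed.

Lemma eps_prim m : (0 < m)%N -> m.-primitive_root (eps m).
Proof. by case: m => // k _; rewrite /eps; case: C_prim_root_exists. Qed.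

Lemma int_mpoly_Psi m : int_mpoly (Psi m).
Proof.
case: m => [|k]; first by rewrite /Psi big_ord0; exists 1; rewrite rmorph1.
pose r := [seq eps k.+1 ^+ i | i : 'I_k.+1 <- enum 'I_k.+1 & coprime i k.+1].
have -> : Psi k.+1 = \prod_(c <- r) \sum_(j < k.+1) c ^+ j *: 'X_j.
  rewrite /Psi big_map big_filter big_enum_cond /=.
  by apply: eq_bigr => i _; apply: eq_bigr => j _; rewrite exprM.
apply: (@int_mpoly_prod_roots _ _ 'Phi_k.+1).
by rewrite (Cintr_Cyclotomic (eps_prim (ltn0Sn k))) /cyclotomic big_map big_filter big_enum_cond.
Qed.

Section RcosetProduct.
Variables (m : nat) (R : comNzRingType) (p : {mpoly R[m]}).
Let H := [set s : 'S_m | msym s p == p].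
Let cosets := rcosets H [set: 'S_m].

Lemma msym_rcoset C s : C \in cosets -> s \in C -> msym s p = msym (repr C) p.
Proof.
have H1 : 1%g \in H by rewrite inE msym1m.
move=> /imsetP [x _ ->]; rewrite rcosetE => /rcosetP [a aH ->].
have /rcosetP [b bH ->] : repr (H :* x)%g \in (H :* x)%g.
  by apply: (mem_repr x); apply/rcosetP; exists 1%g; rewrite ?mul1g.
by move: aH bH; rewrite !msymMm !inE => /eqP -> /eqP ->.
Qed.

Lemma rcosets_mulr C s : ((C :* s)%g \in cosets) = (C \in cosets).
Proof.
apply/imsetP/imsetP => [[x _ CsE]|[x _ ->]]; last first.
  by exists (x * s)%g; rewrite ?inE // !rcosetE rcosetM.
exists (x * s^-1)%g; rewrite ?inE // rcosetE; rewrite rcosetE in CsE.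
by rewrite rcosetM -CsE -rcosetM mulgV rcoset1.
Qed.

Lemma prod_rcosets_sym : \prod_(C in cosets) msym (repr C) p \is symmetric.
Proof.
apply/issymP => s; rewrite rmorph_prod /=.
rewrite [RHS](reindex_inj (h := fun C => (C :* s)%g) (@rcoset_inj _ s)) /=.
apply: eq_big => [C|C CH]; first by rewrite rcosets_mulr.
rewrite -msymMm; apply: msym_rcoset; first by rewrite rcosets_mulr.
rewrite mem_rcoset mulgK; move: CH => /imsetP [x _ ->]; rewrite rcosetE.
by apply: (mem_repr x); rewrite mem_rcoset mulgV inE msym1m.
Qed.

End RcosetProduct.

Lemma Phi_sym m : Phi m \is symmetric.
Proof. exact: prod_rcosets_sym. Qed.

Lemma int_mpoly_Phi m : int_mpoly (Phi m).
Proof. by apply: int_mpoly_prod => C _; apply/int_mpoly_msym/int_mpoly_Psi. Qed.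

Lemma perm_enum_imset (T U : finType) (f : T -> U) (A : {pred T}) :
  injective f -> perm_eq (enum (f @: A)) (map f (enum A)).
Proof.
move=> f_inj; apply: uniq_perm; rewrite ?map_inj_uniq ?enum_uniq // => y.
rewrite mem_enum; apply/imsetP/mapP => [[x]|[x]]; rewrite ?mem_enum => xA ->.
  by exists x; rewrite ?mem_enum.
by exists x.
Qed.

Definition block_sums n m (P : {set {set 'I_n}}) : m.-tuple {mpoly algC[n]} :=
  [tuple \sum_(a in nth set0 (enum P) i) 'X_a | i < m].

Definition perm_blocks n (s : 'S_n) (P : {set {set 'I_n}}) : {set {set 'I_n}} :=
  [set s @: B | B : {set 'I_n} in P].

Section EqPartitions.
Variables n m : nat.

Lemma ThetaE : Theta n m = \prod_(P in eq_partitions n m) (Phi m \mPo block_sums m P).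
Proof. by []. Qed.

Lemma block_sumsE (P : {set {set 'I_n}}) : #|P| = m ->
  block_sums m P = [seq \sum_(a in B) 'X_a | B : {set 'I_n} <- enum P] :> seq _.
Proof.
rewrite cardE => <-; rewrite -[in RHS](mkseq_nth set0 (enum P)) /mkseq -map_comp.
by rewrite /= -val_enum_ord -map_comp.
Qed.

Lemma perm_blocksK (s : 'S_n) : cancel (perm_blocks s) (perm_blocks s^-1).
Proof.
move=> P; rewrite /perm_blocks -imset_comp -[RHS]imset_id; apply: eq_imset => B /=.
by rewrite -imset_comp -[RHS]imset_id; apply: eq_imset => x /=; rewrite permK.
Qed.

Lemma perm_blocks_eq_partitions (s : 'S_n) P :
  P \in eq_partitions n m -> perm_blocks s P \in eq_partitions n m.
Proof.
have s_inj := @perm_inj _ s.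
have sT : s @: [set: 'I_n] = [set: 'I_n].
  by apply/eqP; rewrite eqEcard subsetT (card_imset _ s_inj) /=.
rewrite !inE => /and3P [P_part /eqP <- P_card]; apply/and3P; split.
- by rewrite -sT imset_partition.
- by rewrite card_imset //; exact: imset_inj.
- apply/forall_inP => _ /imsetP [B BP ->].
  by rewrite card_imset //; exact: (forall_inP P_card).
Qed.

Lemma perm_blocks_eq_partitionsE (s : 'S_n) P :
  (perm_blocks s P \in eq_partitions n m) = (P \in eq_partitions n m).
Proof.
apply/idP/idP; last exact: perm_blocks_eq_partitions.
by move/(perm_blocks_eq_partitions s^-1); rewrite perm_blocksK.
Qed.

Lemma msym_block_sums (s : 'S_n) P : P \in eq_partitions n m ->
  perm_eq [tuple msym s (tnth (block_sums m P) i) | i < m] (block_sums m (perm_blocks s P)).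
Proof.
move=> Peq; have := perm_blocks_eq_partitions s Peq.
rewrite !inE => /and3P [_ /eqP cardsP _]; move: Peq; rewrite inE => /and3P [_ /eqP cardP _].
rewrite (block_sumsE cardsP) /= (map_comp (msym s) (tnth _)) map_tnth_enum.
have msym_sum (B : {set 'I_n}) :
    msym s (\sum_(a in B) 'X_a : {mpoly algC[n]}) = \sum_(a in s @: B) 'X_a.
  rewrite rmorph_sum big_imset /=; last exact: in2W (@perm_inj _ s).
  by apply: eq_bigr => a _; rewrite msymXU.
rewrite (block_sumsE cardP) -map_comp (eq_map msym_sum).
rewrite (map_comp (fun B : {set 'I_n} => \sum_(a in B) 'X_a : {mpoly algC[n]})).
by apply: perm_map; rewrite perm_sym; apply/perm_enum_imset/imset_inj/perm_inj.
Qed.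

Lemma Theta_sym : Theta n m \is symmetric.
Proof.
apply/issymP => s; rewrite ThetaE rmorph_prod /=.
rewrite [RHS](reindex_inj (can_inj (perm_blocksK s))) /=.
apply: eq_big => [P|P Peq]; first by rewrite perm_blocks_eq_partitionsE.
rewrite msym_comp_mpoly; apply: comp_mpoly_perm_eq; first exact: Phi_sym.
exact: msym_block_sums.
Qed.

Lemma int_mpoly_Phi_block_sums (P : {set {set 'I_n}}) :
  int_mpoly (Phi m \mPo block_sums m P).
Proof.
by apply: int_mpoly_comp (int_mpoly_Phi m) _ => i; rewrite tnth_mktuple; apply: int_mpoly_sumX.
Qed.

Lemma int_mpoly_Theta : int_mpoly (Theta n m).
Proof. by apply: int_mpoly_prod => P _; apply: int_mpoly_Phi_block_sums. Qed.

End EqPartitions.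

Lemma map_mpoly_comp_mesym n (t : {mpoly int[n]}) :
  map_mpoly intr (t \mPo [tuple mesym n int i.+1 | i < n]) = map_mpoly intr t \mPo elem_sym n.
Proof.
rewrite map_mpoly_comp; last exact: intr_inj.
by congr (_ \mPo _); apply: eq_from_tnth => i; rewrite !tnth_map !tnth_ord_tuple map_mesym.
Qed.

Lemma map_theta_mesym n m :
  map_mpoly intr (theta n m \mPo [tuple mesym n int i.+1 | i < n]) = Theta n m.
Proof.
have [Z ZE] := int_mpoly_Theta n m.
have Z_sym : Z \is symmetric.
  apply/issymP => s; apply: (map_mpoly_inj (@intr_inj algC)).
  by rewrite map_msym ZE; apply/issymP/Theta_sym.
have [t [tE _]] := sym_fundamental Z_sym.
have theta_exists : exists t : {mpoly int[n]}, map_mpoly intr t \mPo elem_sym n = Theta n m.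
  by exists t; rewrite -map_mpoly_comp_mesym tE.
by rewrite map_mpoly_comp_mesym; apply: epsilon_spec theta_exists.
Qed.

(** * The residue-class partition *)

Section ResiduePartition.
Variables n m : nat.
Hypotheses (n_gt0 : (0 < n)%N) (m_dvd_n : (m %| n)%N).

Let m_gt0 : (0 < m)%N. Proof. exact: dvdn_gt0 m_dvd_n. Qed.
Let m_le_n : (m <= n)%N. Proof. exact: dvdn_leq m_dvd_n. Qed.

Definition residue_class (j : nat) : {set 'I_n} := [set a : 'I_n | (a %% m)%N == j].

Definition residue_partition : {set {set 'I_n}} := [set residue_class j | j : 'I_m].

Definition residue_sums : m.-tuple {mpoly algC[n]} :=
  [tuple \sum_(a in residue_class i) 'X_a | i < m].

Lemma residue_partitionE :
  preim_partition (fun a : 'I_n => (a %% m)%N) [set: 'I_n] = residue_partition.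
Proof.
rewrite /preim_partition /equivalence_partition /residue_partition.
apply/setP => B; apply/idP/idP => /imsetP [a _ ->]; apply/imsetP.
  exists (Ordinal (ltn_pmod a m_gt0)) => //.
  by apply/setP => b; rewrite !inE eq_sym.
exists (widen_ord m_le_n a) => //.
by apply/setP => b; rewrite !inE /= (modn_small (ltn_ord a)) eq_sym.
Qed.

Lemma residue_class_inj : injective (residue_class \o @nat_of_ord m).
Proof.
move=> i j /= ij; have : widen_ord m_le_n i \in residue_class j.
  by rewrite -ij inE /= (modn_small (ltn_ord i)).
by rewrite inE /= (modn_small (ltn_ord i)) => /eqP /val_inj.
Qed.

Lemma card_residue_class j : (j < m)%N -> #|residue_class j| = (n %/ m)%N.
Proof.
move=> j_lt_m.
have lt_n t : (t < n %/ m)%N -> (j + t * m < n)%N.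
  move=> t_lt; rewrite -(divnK m_dvd_n) (@leq_trans (t.+1 * m)) //.
    by rewrite mulSn ltn_add2r.
  by rewrite leq_mul2r t_lt orbT.
have -> : residue_class j = [set Ordinal (lt_n t (ltn_ord t)) | t : 'I_(n %/ m)].
  apply/setP => a; rewrite inE; apply/eqP/imsetP => [aj|[t _ ->]]; last first.
    by rewrite /= addnC modnMDl modn_small.
  have a_div : (a %/ m < n %/ m)%N by rewrite ltn_divLR // divnK.
  by exists (Ordinal a_div) => //; apply: val_inj; rewrite /= addnC -aj -divn_eq.
rewrite card_imset ?card_ord // => t1 t2 /(congr1 val) /= /eqP.
by rewrite eqn_add2l eqn_mul2r eqn0Ngt m_gt0 => /eqP /val_inj.
Qed.

Lemma card_residue_partition : #|residue_partition| = m.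
Proof. by rewrite card_imset ?card_ord //; exact: residue_class_inj. Qed.

Lemma residue_partition_eq : residue_partition \in eq_partitions n m.
Proof.
rewrite inE -{1}residue_partitionE preim_partitionP card_residue_partition eqxx /=.
by apply/forall_inP => _ /imsetP [j _ ->]; rewrite card_residue_class.
Qed.

Lemma perm_block_residue_sums : perm_eq (block_sums m residue_partition) residue_sums.
Proof.
rewrite (block_sumsE card_residue_partition).
apply: perm_trans (perm_map _ (perm_enum_imset _ residue_class_inj)) _.
by rewrite -map_comp; apply: perm_refl.
Qed.

Lemma Theta_residue_factor :
  exists2 Q, int_mpoly Q & Theta n m = (Psi m \mPo residue_sums) * Q.
Proof.
have StabPsi1 : 1%g \in StabPsi m by rewrite inE msym1m.
have StabPsi_coset : StabPsi m \in rcosets (StabPsi m) [set: 'S_m].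
  by apply/imsetP; exists 1%g; rewrite ?inE // rcosetE rcoset1.
have repr_StabPsi : repr (StabPsi m) = 1%g by rewrite /repr StabPsi1.
rewrite ThetaE (bigD1 _ residue_partition_eq) /=.
rewrite (comp_mpoly_perm_eq (Phi_sym m) perm_block_residue_sums).
rewrite {1}/Phi (bigD1 _ StabPsi_coset) /= repr_StabPsi msym1m rmorphM /= -mulrA.
eexists; last reflexivity; apply: int_mpolyM.
  apply: int_mpoly_comp => [|i]; last by rewrite tnth_mktuple; apply: int_mpoly_sumX.
  by apply: int_mpoly_prod => C _; apply/int_mpoly_msym/int_mpoly_Psi.
by apply: int_mpoly_prod => P _; apply: int_mpoly_Phi_block_sums.
Qed.

End ResiduePartition.

(** * Circulant determinants *)

Definition circ_eigenvalue n (z : algC) : {mpoly algC[n]} := \sum_(a < n) z ^+ a *: 'X_a.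

Lemma Psi_residue_sums n m : (0 < n)%N -> (m %| n)%N ->
  Psi m \mPo residue_sums n m = \prod_(i < m | coprime i m) circ_eigenvalue n (eps m ^+ i).
Proof.
move=> n_gt0 m_dvd_n; have m_gt0 := dvdn_gt0 n_gt0 m_dvd_n.
have eps_m := eps_prim m_gt0.
rewrite /Psi rmorph_prod; apply: eq_bigr => i _; rewrite rmorph_sum /= /circ_eigenvalue.
rewrite (partition_big (fun a : 'I_n => Ordinal (ltn_pmod a m_gt0)) predT) //=.
apply: eq_bigr => j _; rewrite comp_mpolyZ comp_mpolyXU -tnth_nth tnth_mktuple scaler_sumr.
apply: eq_big => [a|a]; first by rewrite inE.
rewrite inE => /eqP <-.
rewrite /= -(prim_expr_mod eps_m) modnMmr (prim_expr_mod eps_m).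
by congr (_ *: _); apply: exprM.
Qed.

(* [j - i] is the difference in 'I_k.+1 = Z/(k+1)Z, not truncated subtraction. *)
Definition circulant (R : Type) k (x : 'I_k.+1 -> R) : 'M[R]_k.+1 :=
  \matrix_(i, j) x (j - i).

Lemma det_circulant (R : idomainType) k (z : R) (x : 'I_k.+1 -> R) :
  k.+1.-primitive_root z ->
  \det (circulant x) = \prod_(j < k.+1) \sum_(a < k.+1) z ^+ (a * j) * x a.
Proof.
move=> z_prim; pose W : 'M[R]_k.+1 := \matrix_(i, j) z ^+ (i * j).
pose lambda := \row_(j < k.+1) \sum_(a < k.+1) z ^+ (a * j) * x a.
have eigen : circulant x *m W = W *m diag_mx lambda.
  apply/matrixP => i j; rewrite mul_mx_diag !mxE mulr_sumr.
  rewrite (reindex (fun a => a + i)); last by exists (fun a => a - i) => a _; rewrite ?addrK ?subrK.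
  apply: eq_bigr => a _; rewrite !mxE addrK mulrA -exprD mulrC; congr (_ * _).
  by apply/eqP; rewrite (eq_prim_root_expr z_prim) /= modnMml mulnDl addnC.
have W_unit : \det W != 0.
  have -> : W = Vandermonde k.+1 (\row_(j < k.+1) z ^+ j).
    by apply/matrixP => i j; rewrite !mxE mulnC exprM.
  rewrite det_Vandermonde; apply/prodf_neq0 => i _; apply/prodf_neq0 => j ij.
  by rewrite !mxE subr_eq0 (eq_prim_root_expr z_prim) !modn_small // eq_sym neq_ltn ij.
have := congr1 determinant eigen; rewrite !det_mulmx det_diag mulrC => /(mulfI W_unit) ->.
by apply: eq_bigr => j _; rewrite mxE.
Qed.

Lemma perm_prim_roots n m : (0 < n)%N -> (m %| n)%N ->
  perm_eq [seq eps n ^+ k | k : 'I_n <- enum 'I_n & m.-primitive_root (eps n ^+ k)]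
          [seq eps m ^+ i | i : 'I_m <- enum 'I_m & coprime i m].
Proof.
move=> n_gt0 m_dvd_n; have m_gt0 := dvdn_gt0 n_gt0 m_dvd_n.
have [wn wm] := (eps_prim n_gt0, eps_prim m_gt0).
have uniq_pows l (z : algC) (P : pred 'I_l) :
    l.-primitive_root z -> uniq [seq z ^+ i | i : 'I_l <- enum 'I_l & P i].
  move=> z_prim; rewrite map_inj_in_uniq => [|i j _ _ /eqP]; first exact/filter_uniq/enum_uniq.
  by rewrite (eq_prim_root_expr z_prim) !modn_small // => /eqP /val_inj.
apply: uniq_perm; [exact: uniq_pows wn | exact: uniq_pows wm |].
move=> x; apply/mapP/mapP => [[k]|[i]]; rewrite mem_filter mem_enum andbT => prim ->.
  have [i iE] := prim_rootP wm (prim_expr_order prim); rewrite iE in prim *.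
  by exists i; rewrite // mem_filter mem_enum andbT -(prim_root_exp_coprime i wm).
have prim_i : m.-primitive_root (eps m ^+ i) by rewrite prim_root_exp_coprime.
have [k kE] := prim_rootP wn (expr_dvd (prim_expr_order prim_i) m_dvd_n).
by exists k; rewrite // mem_filter mem_enum andbT -kE.
Qed.

Lemma prod_roots_of_unity_by_order (R : comNzRingType) n (F : algC -> R) : (0 < n)%N ->
  \prod_(k < n) F (eps n ^+ k) =
  \prod_(m <- divisors n) \prod_(i < m | coprime i m) F (eps m ^+ i).
Proof.
move=> n_gt0; have wn := eps_prim n_gt0.
have order_once (k : 'I_n) :
    \prod_(m <- divisors n | m.-primitive_root (eps n ^+ k)) F (eps n ^+ k) = F (eps n ^+ k).
  have unity : (eps n ^+ k) ^+ n = 1 by rewrite exprAC (prim_expr_order wn) expr1n.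
  have [m0 prim_m0 m0_dvd_n] := prim_order_exists n_gt0 unity.
  rewrite big_mkcond (bigD1_seq m0) ?divisors_uniq -?dvdn_divisors //= prim_m0.
  rewrite big_seq_cond big1 ?mulr1 // => m /andP [_ m_neq]; case: ifP => // prim_m.
  case/negP: m_neq; rewrite eqn_dvd (prim_order_dvd prim_m) (prim_order_dvd prim_m0).
  by rewrite (prim_expr_order prim_m) (prim_expr_order prim_m0) eqxx.
rewrite -(eq_bigr _ (fun k _ => order_once k)) (exchange_big_dep xpredT) //=.
rewrite big_seq [RHS]big_seq; apply: eq_bigr => m; rewrite -dvdn_divisors // => m_dvd_n.
have big_pows l (P : pred 'I_l) (z : algC) :
    \prod_(i < l | P i) F (z ^+ i) = \prod_(x <- [seq z ^+ i | i : 'I_l <- enum 'I_l & P i]) F x.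
  by rewrite big_map big_filter big_enum_cond.
by rewrite !big_pows; apply/perm_big/perm_prim_roots.
Qed.

Lemma int_mpoly_big_factor n (I : eqType) (r : seq I) (A B : I -> {mpoly algC[n]}) :
    (forall i, i \in r -> exists2 Q, int_mpoly Q & A i = B i * Q) ->
  exists2 Q, int_mpoly Q & \prod_(i <- r) A i = \prod_(i <- r) B i * Q.
Proof.
elim: r => [|i r IHr] factor.
  by exists 1; [exists 1; rewrite rmorph1 | rewrite !big_nil mulr1].
rewrite !big_cons; have [Qi intQi ->] := factor i (mem_head i r).
have [Q intQ ->] := IHr (fun j jr => factor j (mem_behead (s := i :: r) jr)).
by exists (Qi * Q); [apply: int_mpolyM | rewrite mulrACA].
Qed.

Section CirculantOfVariables.
Variable k : nat.
Local Notation n := k.+1.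

Lemma det_circulant_X :
  \det (circulant (fun a => 'X_a : {mpoly algC[n]})) =
  \prod_(m <- divisors n) (Psi m \mPo residue_sums n m).
Proof.
have eps_MP : n.-primitive_root (eps n)%:MP_[n] by rewrite fmorph_primitive_root eps_prim.
rewrite (det_circulant _ eps_MP).
have -> : \prod_(j < n) \sum_(a < n) (eps n)%:MP ^+ (a * j) * 'X_a =
    \prod_(j < n) circ_eigenvalue n (eps n ^+ j).
  apply: eq_bigr => j _; apply: eq_bigr => a _.
  by rewrite -rmorphXn mul_mpolyC mulnC exprM.
rewrite prod_roots_of_unity_by_order // big_seq [RHS]big_seq.
by apply: eq_bigr => m; rewrite -dvdn_divisors // => m_dvd_n; rewrite Psi_residue_sums.
Qed.

Lemma h_mesym_factor : exists Q : {mpoly int[n]},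
  h n \mPo [tuple mesym n int i.+1 | i < n] =
  \det (circulant (fun a => 'X_a : {mpoly int[n]})) * Q.
Proof.
have [Q [Qz <-] prod_ThetaE] : exists2 Q, int_mpoly Q &
    \prod_(m <- divisors n) Theta n m = \det (circulant (fun a => 'X_a)) * Q.
  rewrite det_circulant_X; apply: int_mpoly_big_factor => m.
  by rewrite -dvdn_divisors // => m_dvd_n; apply: Theta_residue_factor.
exists Qz; apply: (map_mpoly_inj (@intr_inj algC)).
rewrite /h !rmorph_prod /= (eq_bigr _ (fun m _ => map_theta_mesym n m)) prod_ThetaE.
rewrite rmorphM /= -det_map_mx; congr (\det _ * _).
by apply/matrixP => i j; rewrite !mxE /= (map_mpolyX _ U_(j - i)).
Qed.

Lemma det_circulant_neq0 (S : idomainType) (v : 'I_n -> S) :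
  (map_mpoly intr (h n)).@[fun i => (mesym n S i.+1).@[v]] != 0 -> \det (circulant v) != 0.
Proof.
have [Q hE] := h_mesym_factor.
have eval_det : mmap intr v (\det (circulant (fun a => 'X_a))) = \det (circulant v).
  rewrite -det_map_mx; congr (\det _); apply/matrixP => i j.
  by rewrite !mxE /= (mmapX _ _ U_(j - i)) mmap1U.
have eval_h : (map_mpoly intr (h n)).@[fun i => (mesym n S i.+1).@[v]] =
    mmap intr v (h n \mPo [tuple mesym n int i.+1 | i < n]).
  rewrite meval_map_mpoly mmap_comp_mpoly; apply: eq_mmap => // i.
  by rewrite tnth_mktuple mmap_mesym.
by rewrite eval_h hE rmorphM /= eval_det mulf_eq0 negb_or => /andP [].
Qed.

End CirculantOfVariables.

(** * Roots of a polynomial with cyclic Galois group *)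

Lemma gal_eq1_on_generators (F : fieldType) (L : splittingFieldType F) (K : {subfield L})
    (s : gal_of K) (rs : seq L) :
  <<1%AS & rs>>%VS = K -> {in rs, s =1 id} -> s = 1%g.
Proof.
move=> Krs s_rs; have rsK r : r \in rs -> r \in K by rewrite -Krs; apply: seqv_sub_adjoin.
have K_fixed : (K <= fixedField [set s])%VS.
  rewrite -{1}Krs; apply/Fadjoin_seqP; split; first exact: sub1v.
  by move=> r rs_r; apply/(fixedFieldP (rsK r rs_r)) => x /set1P ->; apply: s_rs.
apply/eqP/gal_eqP => a Ka; rewrite gal_id.
by have /(fixedFieldP Ka) -> := subvP K_fixed a Ka; rewrite ?set11.
Qed.

Section CyclicGaloisRoots.
Variables (F : fieldType) (L : splittingFieldType F) (K : {subfield L}).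
Variables (f : {poly F}) (rs : seq L) (g : gal_of K) (k : nat).
Local Notation fL := (map_poly (in_alg L) f).
Local Notation n := k.+1.
Hypotheses (f_monic : f \is monic) (f_irr : irreducible_poly f) (f_sep : separable_poly f).
Hypotheses (fE : fL = \prod_(r <- rs) ('X - r%:P)) (Krs : <<1%AS & rs>>%VS = K).
Hypotheses (Gal_g : 'Gal(K / 1%AS)%g = <[g]>%g) (rs_size : size rs = n).

Lemma rs_uniq : uniq rs.
Proof. by rewrite -separable_prod_XsubC -fE separable_map. Qed.

Lemma mem_rs y : (y \in rs) = root fL y.
Proof. by rewrite fE root_prod_XsubC. Qed.

Lemma rs_subK : {subset rs <= K}.
Proof. by move=> r rs_r; rewrite -Krs seqv_sub_adjoin. Qed.

Lemma fL_over1 : fL \is a polyOver 1%AS.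
Proof. by apply/polyOver1P; exists f. Qed.

Lemma galois_K : galois 1%AS K.
Proof.
apply/splitting_galoisField; exists fL; split; rewrite ?fL_over1 ?separable_map //.
by exists rs; rewrite ?fE ?eqpxx.
Qed.

Lemma minPoly_rs y : y \in rs -> minPoly 1%AS y = fL.
Proof.
move=> rs_y; have [q qE] := polyOver1P (minPolyOver 1%AS y).
have q_dvd_f : q %| f.
  by rewrite -(dvdp_map (in_alg L)) -qE minPoly_dvdp ?fL_over1 -?mem_rs.
have q_size : size q != 1.
  by rewrite -(size_map_poly (in_alg L)) -qE size_minPoly.
have := f_irr.2 q q_size q_dvd_f; rewrite -(eqp_map (in_alg L)) -qE.
by rewrite eqp_monic ?monic_minPoly ?map_monic // => /eqP.
Qed.

Lemma gal_transitive_rs y z : y \in rs -> z \in rs ->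
  exists2 s, s \in 'Gal(K / 1%AS)%g & s y = z.
Proof.
move=> rs_y; have /(normalField_factors (sub1v K)) factors : normalField 1%AS K.
  by case/and3P: galois_K.
have [r r_sub minE] := factors y (rs_subK rs_y).
rewrite mem_rs -(minPoly_rs rs_y) minE.
rewrite -(big_map (fun s : gal_of K => s y) xpredT (fun b => 'X - b%:P)) root_prod_XsubC.
by case/mapP => s r_s ->; exists s => //; apply: (subsetP r_sub).
Qed.

Lemma gal_mem_rs s y : s \in 'Gal(K / 1%AS)%g -> y \in rs -> s y \in rs.
Proof.
by move=> Gal_s rs_y; rewrite mem_rs -(minPoly_rs rs_y) root_minPoly_gal ?sub1v ?rs_subK.
Qed.

Lemma gal_eq_on_rs s t y : s \in 'Gal(K / 1%AS)%g -> t \in 'Gal(K / 1%AS)%g ->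
  y \in rs -> s y = t y -> s = t.
Proof.
rewrite Gal_g => gs gt rs_y sty; apply/eqP; rewrite eq_mulgV1; apply/eqP.
have g_comm u v : u \in <[g]>%g -> v \in <[g]>%g -> (u * v = v * u)%g.
  by move=> gu gv; apply: (centsP (cycle_abelian g)).
apply: (gal_eq1_on_generators Krs) => z rs_z.
have fix_y : (s * t^-1)%g y = y.
  by rewrite galM ?rs_subK // sty -galM ?rs_subK // mulgV gal_id.
have [u gu <-] := gal_transitive_rs rs_y rs_z; rewrite Gal_g in gu.
by rewrite -galM ?rs_subK // g_comm ?groupM ?groupV // galM ?rs_subK // fix_y.
Qed.

Let y0 := nth 0 rs 0.
Let rs_y0 : y0 \in rs. Proof. by rewrite mem_nth // rs_size. Qed.

Definition orbit_root j := (g ^+ j)%g y0.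

Lemma Gal_expg j : (g ^+ j)%g \in 'Gal(K / 1%AS)%g.
Proof. by rewrite Gal_g mem_cycle. Qed.

Lemma perm_rs_orbit : perm_eq rs [seq orbit_root j | j <- iota 0 #[g]%g].
Proof.
apply: uniq_perm rs_uniq _ _.
  rewrite map_inj_in_uniq ?iota_uniq // => i j; rewrite !mem_iota !add0n => ig jg.
  move/(gal_eq_on_rs (Gal_expg i) (Gal_expg j) rs_y0)/eqP.
  by rewrite eq_expg_mod_order !modn_small // => /eqP.
move=> z; apply/idP/mapP => [rs_z|[j _ ->]]; last exact: gal_mem_rs (Gal_expg j) rs_y0.
have [s] := gal_transitive_rs rs_y0 rs_z; rewrite Gal_g => /cycleP [i ->] <-.
exists (i %% #[g]%g)%N; last by rewrite /orbit_root expg_mod_order.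
by rewrite mem_iota add0n ltn_mod order_gt0.
Qed.

Lemma order_g : #[g]%g = n.
Proof. by rewrite -rs_size (perm_size perm_rs_orbit) size_map size_iota. Qed.

Lemma perm_rs_orbit_tuple : perm_eq rs [tuple orbit_root j | j < n].
Proof.
by rewrite /= (map_comp orbit_root val) val_enum_ord -order_g; apply: perm_rs_orbit.
Qed.

Lemma dimK : \dim K = n.
Proof. by have := galois_dim galois_K; rewrite dimv1 divn1 Gal_g -orderE order_g. Qed.

Lemma orbit_root_sub (t j : 'I_n) : orbit_root (j - t)%R = (g ^+ (n - t))%g (orbit_root j).
Proof.
rewrite /orbit_root -galM ?rs_subK // -expgD -[in RHS](expg_mod_order g) order_g /=.
by rewrite modnDmr.
Qed.

Lemma free_orbit_roots : \det (circulant (fun a : 'I_n => - orbit_root a)) != 0 ->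
  free [tuple orbit_root j | j < n].
Proof.
(* Row t of the transposed circulant is -(g^(n-t) y_j)_j, so applying g^(n-t) to
   the relation sum0 shows that c is in its left kernel. *)
move=> det_neq0; apply/freeP => c sum0 i.
pose cL := \row_(j < n) in_alg L (c j).
suff cL0 : cL = 0.
  by have /eqP := congr1 (fun M : 'rV_n => M 0 i) cL0; rewrite !mxE fmorph_eq0 => /eqP.
apply/eqP; apply: contraR det_neq0 => cL_neq0; rewrite -det_tr.
apply/det0P; exists cL => //; apply/matrixP => o t; rewrite !mxE.
under eq_bigr do rewrite !mxE orbit_root_sub mulrN.
rewrite sumrN -[RHS]oppr0; congr (- _).
transitivity ((g ^+ (n - t))%g (\sum_(j < n) c j *: [tuple orbit_root a | a < n]`_j)).
  rewrite rmorph_sum; apply: eq_bigr => j _.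
  by rewrite -tnth_nth tnth_mktuple -mulr_algl rmorphM /= linearZ /= rmorph1.
by rewrite sum0 rmorph0.
Qed.

Lemma coef_orbit_roots (i : 'I_n) :
  in_alg L f`_(n - i.+1) = (mesym n L i.+1).@[fun a => - orbit_root a].
Proof.
rewrite meval_mesym_opp -coef_map fE (perm_big _ perm_rs_orbit_tuple).
rewrite (mroots_coeff _ (lift ord0 i)).
by congr (_ * _); apply: meval_eq => a; rewrite tnth_mktuple.
Qed.

Lemma basis_of_rs : (map_mpoly intr (h n)).@[fun i : 'I_n => f`_(n - i.+1)] != 0 ->
  basis_of K rs.
Proof.
move=> h_neq0; rewrite basisEfree (perm_free perm_rs_orbit_tuple) dimK rs_size leqnn andbT.
apply/andP; split; last by apply/span_subvP => r; apply: rs_subK.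
apply/free_orbit_roots/det_circulant_neq0.
by rewrite -(meval_eq _ coef_orbit_roots) -rmorph_meval_intr fmorph_eq0.
Qed.

End CyclicGaloisRoots.

Theorem theorem3p3 (F : fieldType) (L : splittingFieldType F)
    (n : nat) (f : {poly F}) (K : {subfield L}) :
  (0 < n)%N ->
  f \is monic -> size f = n.+1 ->
  separable_poly f -> irreducible_poly f ->
  splittingFieldFor 1%AS (map_poly (in_alg L) f) K ->
  cyclic 'Gal(K / 1%AS) ->
  (map_mpoly intr (h n)).@[fun i : 'I_n => f`_(n - i.+1)] != 0 ->
  exists2 rs : seq L,
    map_poly (in_alg L) f = \prod_(r <- rs) ('X - r%:P) & basis_of K rs.
Proof.
move=> n_gt0 f_monic f_size f_sep f_irr [rs rsE Krs] /cyclicP [g Gal_g] h_neq0.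
have fE : map_poly (in_alg L) f = \prod_(r <- rs) ('X - r%:P).
  by apply/eqP; rewrite -eqp_monic ?map_monic ?monic_prod_XsubC.
exists rs => //; case: n n_gt0 f_size h_neq0 => // k _ f_size h_neq0.
have rs_size : size rs = k.+1.
  by have := size_prod_XsubC rs id; rewrite -fE size_map_poly f_size => -[].
exact: basis_of_rs f_monic f_irr f_sep fE Krs Gal_g rs_size h_neq0.
Qed.
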